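(* (i) Let $\mathbf G=(G,\le,\cdot,\to,0,1)$ be a contrapositionally residuated po-groupoid and define $x/y:={\sim}x\to{\sim}y$. Then $\mathbf G'=(G,\le,\cdot,/,0,1)$ is a left-residuated po-groupoid satisfying the double negation law $\neg\neg x=x$ (where $\neg x:=0/x$); moreover $\neg x={\sim}x$ and $\neg x/\neg y=x\to y$ for all $x,y\in G$. (ii) Conversely, let $\mathbf G=(G,\le,\cdot,/,0,1)$ be a left-residuated po-groupoid satisfying $\neg\neg x=x$, and define $x\to y:=\neg x/\neg y$. Then $(G,\le,\cdot,\to,0,1)$ is a contrapositionally residuated po-groupoid, with ${\sim}x=\neg x$ and ${\sim}x\to{\sim}y=x/y$ for all $x,y\in G$. Hence contrapositionally residuated po-groupoids are equivalent (via these mutually inverse translations) to left-residuated po-groupoids satisfying the double negation law.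
   Context: A (bounded integral) left-residuated po-groupoid is a structure $\mathbf G=(G,\le,\cdot,/,0,1)$ where $(G,\le,0,1)$ is a bounded poset with least element $0$ and greatest element $1$, $\cdot$ is a binary operation on $G$ with $1\cdot x=x\cdot 1=x$ for all $x$ (no associativity, commutativity or monotonicity is assumed), and $/$ is a binary operation on $G$ satisfying the left residuation law: for all $x,y,z\in G$, $x\cdot y\le z\iff x\le z/y$. Its negation is $\neg x:=0/x$. A (bounded integral) contrapositionally residuated po-groupoid is a structure $\mathbf G=(G,\le,\cdot,\to,0,1)$ where $(G,\le,0,1)$ is a bounded poset with least element $0$ and greatest element $1$, $(G,\cdot,1)$ is a groupoid with identity $1$, and $\to$ is a binary operation such that for all $x,y,z\in G$: $1\to x=x$, and $x\cdot y\le z$ iff $x\le {\sim}z\to{\sim}y$, where ${\sim}x:=x\to 0$. *)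

Definition bounded_poset {G : Type} (le : G -> G -> Prop) (zero one : G) : Prop :=
  (forall x, le x x) /\
  (forall x y, le x y -> le y x -> x = y) /\
  (forall x y z, le x y -> le y z -> le x z) /\
  (forall x, le zero x) /\
  (forall x, le x one).

Definition left_residuated_pogroupoid {G : Type} (le : G -> G -> Prop)
  (mul rdiv : G -> G -> G) (zero one : G) : Prop :=
  bounded_poset le zero one /\
  (forall x, mul one x = x /\ mul x one = x) /\
  (forall x y z, le (mul x y) z <-> le x (rdiv z y)).

Definition lneg {G : Type} (rdiv : G -> G -> G) (zero : G) (x : G) : G :=
  rdiv zero x.

Definition tneg {G : Type} (imp : G -> G -> G) (zero : G) (x : G) : G :=
  imp x zero.

Definition contra_residuated_pogroupoid {G : Type} (le : G -> G -> Prop)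
  (mul imp : G -> G -> G) (zero one : G) : Prop :=
  bounded_poset le zero one /\
  (forall x, mul one x = x /\ mul x one = x) /\
  (forall x, imp one x = x) /\
  (forall x y z, le (mul x y) z <-> le x (imp (tneg imp zero z) (tneg imp zero y))).

(* Residuating at the unit is the identity: [x / 1 = x] and [~x -> ~1 = x].
   Together with [1 -> x = x] resp. the bounds, this gives [~1 = 0] and
   involutive [~], resp. [neg 1 = 0] and [neg 0 = 1]; the two translations
   then cancel the double negations they introduce. *)


Definition imp_div {G : Type} (imp : G -> G -> G) (zero : G) (x y : G) : G :=
  imp (tneg imp zero x) (tneg imp zero y).

Definition div_imp {G : Type} (rdiv : G -> G -> G) (zero : G) (x y : G) : G :=
  rdiv (lneg rdiv zero x) (lneg rdiv zero y).

Lemma residual_at_unit {G : Type} (le : G -> G -> Prop) (mul r : G -> G -> G)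
    (one : G) :
  (forall x, le x x) -> (forall x y, le x y -> le y x -> x = y) ->
  (forall x, mul x one = x) ->
  (forall x z, le (mul x one) z <-> le x (r z one)) ->
  forall z, r z one = z.
Proof.
intros refl antisym mulx1 res z.
apply antisym.
- rewrite <- (mulx1 (r z one)). apply res, refl.
- apply res. rewrite mulx1. apply refl.
Qed.

Section LeftResiduated.

Context {G : Type} {le : G -> G -> Prop} {mul rdiv : G -> G -> G} {zero one : G}.
Hypothesis HG : left_residuated_pogroupoid le mul rdiv zero one.

Lemma rdiv_unit (x : G) : rdiv x one = x.
Proof.
destruct HG as [[refl [antisym _]] [unit res]].
apply (residual_at_unit le mul rdiv one refl antisym); [apply unit | auto].
Qed.

Lemma lneg_one : lneg rdiv zero one = zero.
Proof. apply rdiv_unit. Qed.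

Lemma lneg_zero : lneg rdiv zero zero = one.
Proof.
destruct HG as [[refl [antisym [_ [_ top]]]] [unit res]].
apply antisym; [apply top |].
apply res. rewrite (proj1 (unit zero)). apply refl.
Qed.

Hypothesis lneg_involutive : forall x, lneg rdiv zero (lneg rdiv zero x) = x.

Lemma tneg_div_imp (x : G) : tneg (div_imp rdiv zero) zero x = lneg rdiv zero x.
Proof. unfold tneg, div_imp. rewrite lneg_zero. apply rdiv_unit. Qed.

Lemma imp_div_div_imp (x y : G) : imp_div (div_imp rdiv zero) zero x y = rdiv x y.
Proof. unfold imp_div. rewrite !tneg_div_imp. unfold div_imp. now rewrite !lneg_involutive. Qed.

Lemma contra_residuated_div_imp :
  contra_residuated_pogroupoid le mul (div_imp rdiv zero) zero one.
Proof.
destruct HG as [poset [unit res]].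
split; [exact poset | split; [exact unit | split]].
- intro x. unfold div_imp. rewrite lneg_one. apply lneg_involutive.
- intros x y z. fold (imp_div (div_imp rdiv zero) zero z y).
  rewrite imp_div_div_imp. apply res.
Qed.

End LeftResiduated.

Section ContraResiduated.

Context {G : Type} {le : G -> G -> Prop} {mul imp : G -> G -> G} {zero one : G}.
Hypothesis HG : contra_residuated_pogroupoid le mul imp zero one.

Lemma imp_div_unit (x : G) : imp_div imp zero x one = x.
Proof.
destruct HG as [[refl [antisym _]] [unit [_ res]]].
apply (residual_at_unit le mul (imp_div imp zero) one refl antisym);
  [apply unit | intros; apply res].
Qed.

Lemma tneg_one : tneg imp zero one = zero.
Proof. apply HG. Qed.

Lemma tneg_involutive (x : G) : tneg imp zero (tneg imp zero x) = x.
Proof.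
pose proof (imp_div_unit x) as unit_x.
unfold imp_div in unit_x. rewrite tneg_one in unit_x. exact unit_x.
Qed.

Lemma tneg_zero : tneg imp zero zero = one.
Proof. pose proof (tneg_involutive one) as e. rewrite tneg_one in e. exact e. Qed.

Lemma lneg_imp_div (x : G) : lneg (imp_div imp zero) zero x = tneg imp zero x.
Proof. unfold lneg, imp_div. rewrite tneg_zero. apply HG. Qed.

Lemma lneg_imp_div_involutive (x : G) :
  lneg (imp_div imp zero) zero (lneg (imp_div imp zero) zero x) = x.
Proof. rewrite !lneg_imp_div. apply tneg_involutive. Qed.

Lemma div_imp_imp_div (x y : G) : div_imp (imp_div imp zero) zero x y = imp x y.
Proof. unfold div_imp. rewrite !lneg_imp_div. unfold imp_div. now rewrite !tneg_involutive. Qed.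

Lemma left_residuated_imp_div :
  left_residuated_pogroupoid le mul (imp_div imp zero) zero one.
Proof. destruct HG as [poset [unit [_ res]]]. split; [exact poset | split; [exact unit | exact res]]. Qed.

End ContraResiduated.

Theorem mainTheorem8 :
  (* (i) *)
  (forall (G : Type) (le : G -> G -> Prop) (mul imp : G -> G -> G) (zero one : G),
     contra_residuated_pogroupoid le mul imp zero one ->
     let rdiv := fun x y => imp (tneg imp zero x) (tneg imp zero y) in
     left_residuated_pogroupoid le mul rdiv zero one /\
     (forall x, lneg rdiv zero (lneg rdiv zero x) = x) /\
     (forall x, lneg rdiv zero x = tneg imp zero x) /\
     (forall x y, rdiv (lneg rdiv zero x) (lneg rdiv zero y) = imp x y)) /\
  (* (ii) *)
  (forall (G : Type) (le : G -> G -> Prop) (mul rdiv : G -> G -> G) (zero one : G),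
     left_residuated_pogroupoid le mul rdiv zero one ->
     (forall x, lneg rdiv zero (lneg rdiv zero x) = x) ->
     let imp := fun x y => rdiv (lneg rdiv zero x) (lneg rdiv zero y) in
     contra_residuated_pogroupoid le mul imp zero one /\
     (forall x, tneg imp zero x = lneg rdiv zero x) /\
     (forall x y, imp (tneg imp zero x) (tneg imp zero y) = rdiv x y)).
Proof.
split.
- intros G le mul imp zero one HG rdiv.
  split; [exact (left_residuated_imp_div HG) | split; [| split]].
  + exact (lneg_imp_div_involutive HG).
  + exact (lneg_imp_div HG).
  + exact (div_imp_imp_div HG).
- intros G le mul rdiv zero one HG lneg_involutive imp.
  split; [exact (contra_residuated_div_imp HG lneg_involutive) | split].
  + exact (tneg_div_imp HG).
  + exact (imp_div_div_imp HG lneg_involutive).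
Qed.
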